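(* Let $A\in\mathcal{A}_{n,1}$ and let $(k;a_1,\dots,a_n;b,\beta)$ be the generalized inversion table of $\Lambda(A)$. Then the generalized inversion table of $\Lambda(A')$ is $(k;a_1,\dots,a_n;b,\beta')$ with $\beta'=b-\beta+a_k-a_{k-1}-1$.
   Context: An alternating sign matrix (ASM) of order $n$ is an $n\times n$ matrix $A=(a_{ij})$ with entries in $\{-1,0,1\}$ such that in every row and every column the nonzero entries alternate in sign, the first and the last nonzero entries being $1$. $\mathcal{A}_{n,1}$ denotes the set of order-$n$ ASMs having exactly one entry equal to $-1$. For an ASM $A=(a_{ij})$, $\overline{A}=(a_{i,n+1-j})$ is the vertical reflection of $A$. Let $A\in\mathcal{A}_{n,1}$. The opening column is the column containing the unique $-1$; the closing row is the row containing the $-1$; the opening row is the row of the $1$ of the opening column lying above the $-1$. The columns strictly to the left (resp. right) of the opening column form the left side (resp. right side). The closing row contains exactly two $1$'s, one in each side; the one in the right side is the closing $1$ and its column is the closing column. The rows strictly between the opening row and the closing row are the enclosed rows. $A$ is neutral if there are no enclosed rows; otherwise $A$ is positive if the $1$ of the lowest enclosed row lies in the right side, and negative if it lies in the left side. $\mathcal{A}_{n,1}^{+},\mathcal{A}_{n,1}^{0},\mathcal{A}_{n,1}^{-}$ denote the sets of positive, neutral, negative elements of $\mathcal{A}_{n,1}$; $A$ is negative iff $\overline{A}$ is positive. For $A\in\mathcal{A}_{n,1}^{+}\cup\mathcal{A}_{n,1}^{0}$: the charged cell is the intersection of the enclosed rows with the right side; the extended neutral cell is the intersection of the rows from the opening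 row to the closing row (inclusive) with the left side. The leading $1$ is the highest $1$ in the left side strictly below the opening row; its column is the leading column; the leading cell consists of the entries strictly below the opening row and strictly between the leading column and the opening column, and $\ell(A)$ is the sum of its entries. The closing cell consists of the entries strictly below the closing row and strictly between the opening column and the closing column, and $c(A)$ is the sum of its entries; the extended closing cell consists of the entries strictly below the closing row in the columns from the opening column to the closing column inclusive. If $A$ is positive, $E(A)$ is the sum of the entries of the charged cell; if $A$ is neutral, $E(A)=0$. Horizontal displacement: for an $m\times q$ $(0,1)$-matrix $P$ whose nonzero columns are $j_1<\dots<j_t$ with $j_1=1$ and $j_t<q$, $H(P)$ is the $m\times q$ matrix whose column $j_{s+1}$ equals column $j_s$ of $P$ for $1\le s\le t$ (where $j_{t+1}=q$), all other columns being zero. Vertical displacement: for an $m\times q$ $(0,1)$-matrix $P$ whose nonzero rows are $i_1<\dots<i_t$ with $i_1>1$ and $i_t=m$, $V(P)$ is the $m\times q$ matrix whose row $i_{s-1}$ equals row $i_s$ of $P$ for $1\le s\le t$ (where $i_0=1$), all other rows being zero. Partial discharging procedure: for $A\in\mathcal{A}_{n,1}^{+}\cup\mathcal{A}_{n,1}^{0}$, $\delta(A)$ is obtained by applying successively the following steps (all cells, rows and columns referring to the positions they occupy in $A$): (1) replace the $-1$ and the closing $1$ by $0$; (2) replace the submatrix occupying the extended closing cell by its image under $H$; (3) replace the submatrix occupying the extended neutral cell by its image under $V$; (4) lower the entries of the extended neutral cell and of the charged cell by one row: in the left side, for each row $t$ strictly below the opening row up to and including the closing row, the left part of row $t$ becomes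 the former left part of row $t-1$, and the left part of the opening row becomes zero; in the right side, for each row $t$ from two rows below the opening row up to and including the closing row, the right part of row $t$ becomes the former right part of row $t-1$, and the right part of the row immediately below the opening row becomes zero. The complete discharging procedure is $\Delta(A)=(k,\delta(A),c(A),E(A))$, where $k$ is the index of the opening row of $A$. It is known that $\Delta$ is injective on $\mathcal{A}_{n,1}^{+}\cup\mathcal{A}_{n,1}^{0}$, and that whenever $\Delta(A)=(k,P,c,E)$, there is a unique $N\in\mathcal{A}_{n,1}^{+}\cup\mathcal{A}_{n,1}^{0}$ with $\Delta(N)=(k,P,c+E,0)$, and this $N$ is neutral. Neutralizing procedure $\Lambda$: for $A\in\mathcal{A}_{n,1}^{+}\cup\mathcal{A}_{n,1}^{0}$ with $\Delta(A)=(k,P,c,E)$, $\Lambda(A)=(N,E)$ where $N$ is the unique element with $\Delta(N)=(k,P,c+E,0)$. For $A\in\mathcal{A}_{n,1}^{-}$, write $\Lambda(\overline{A})=(M,-E)$ and set $\Lambda(A)=(\overline{M},E)$. It is known that $\Lambda$ is a bijection from $\mathcal{A}_{n,1}$ onto $\mathcal{N}_{n,1}=\{(N,E)\,:\,N\in\mathcal{A}_{n,1}^{0},\ E\in\mathbb{Z},\ -\ell(N)\le E\le c(N)\}$. The map $\xi:\mathcal{N}_{n,1}\to\mathcal{N}_{n,1}$ is $\xi(N,E)=(N,\,c(N)-\ell(N)-E)$, and for $A\in\mathcal{A}_{n,1}$, $A'=\Lambda^{-1}(\xi(\Lambda(A)))$. Generalized inversion table: for $(N,E)\in\mathcal{N}_{n,1}$,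 let $n+1-k$ be the index of the opening row of $N$ (so the closing row is row $n+2-k$). For $1\le i\le n$, $a_i$ is the sum of the entries of $N$ lying strictly below row $n+1-i$ and strictly to the left of the unique $1$ of row $n+1-i$ (for $i=k-1$, i.e. the closing row, the leftmost $1$ of that row is used). Let $b=c(N)$ and $\beta=E+\ell(N)$. The generalized inversion table of $(N,E)$ is $(k;a_1,\dots,a_n;b,\beta)$. *)

(* Matrices are 'M[int]_n; all row/column indices in the
   definitions below are 1-based natural numbers, accessed through [ent]. *)
From HB Require Import structures.
From mathcomp Require Import all_boot all_order all_algebra.
Set Implicit Arguments. Unset Strict Implicit. Unset Printing Implicit Defensive.
Import Order.TTheory GRing.Theory Num.Theory.

(* 1-based entry access; 0 outside the matrix *)
Definition ent {n} (A : 'M[int]_n) (i j : nat) : int :=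
  match (insub i.-1 : option 'I_n), (insub j.-1 : option 'I_n) with
  | Some i', Some j' => if (0 < i) && (0 < j) then A i' j' else 0%R
  | _, _ => 0%R
  end.

Definition mkmx n (f : nat -> nat -> int) : 'M[int]_n :=
  \matrix_(i < n, j < n) f i.+1 j.+1.

Definition rng (a b : nat) : seq nat := iota a (b.+1 - a).

(* a line of an ASM: entries in {-1,0,1}, nonzero entries alternate in sign,
   the first and the last nonzero entries are 1 *)
Definition alt_ok (s : seq int) : bool :=
  all (fun x => (x == 1%R) || (x == 0%R) || (x == (-1)%R)) s &&
  (let nz := [seq x <- s | x != 0%R] in
   [&& head 0%R nz == 1%R, last 0%R nz == 1%R &
       sorted (fun x y => y == (- x)%R) nz]).

Definition rowseq {n} (A : 'M[int]_n) i := [seq ent A i j | j <- rng 1 n].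
Definition colseq {n} (A : 'M[int]_n) j := [seq ent A i j | i <- rng 1 n].

Definition isASM {n} (A : 'M[int]_n) : bool :=
  all (fun i => alt_ok (rowseq A i)) (rng 1 n) &&
  all (fun j => alt_ok (colseq A j)) (rng 1 n).

Definition negcount {n} (A : 'M[int]_n) : nat :=
  \sum_(i <- rng 1 n) \sum_(j <- rng 1 n) (ent A i j == (-1)%R).

Definition inA1 {n} (A : 'M[int]_n) : bool := isASM A && (negcount A == 1).

Definition crow {n} (A : 'M[int]_n) : nat :=
  nth 0 [seq i <- rng 1 n | has (fun j => ent A i j == (-1)%R) (rng 1 n)] 0.
Definition ocol {n} (A : 'M[int]_n) : nat :=
  nth 0 [seq j <- rng 1 n | ent A (crow A) j == (-1)%R] 0.
Definition orow {n} (A : 'M[int]_n) : nat :=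
  last 0 [seq i <- rng 1 (crow A).-1 | ent A i (ocol A) == 1%R].
Definition ccol {n} (A : 'M[int]_n) : nat :=
  nth 0 [seq j <- rng (ocol A).+1 n | ent A (crow A) j == 1%R] 0.

Definition has1 {n} (A : 'M[int]_n) (i : nat) (js : seq nat) : bool :=
  has (fun j => ent A i j == 1%R) js.

(* no enclosed rows *)
Definition neutral {n} (A : 'M[int]_n) : bool := crow A == (orow A).+1.
Definition positive {n} (A : 'M[int]_n) : bool :=
  ((orow A).+1 < crow A) && has1 A (crow A).-1 (rng (ocol A).+1 n).
Definition negative {n} (A : 'M[int]_n) : bool :=
  ((orow A).+1 < crow A) && has1 A (crow A).-1 (rng 1 (ocol A).-1).

Definition cellsum {n} (A : 'M[int]_n) (r1 r2 c1 c2 : nat) : int :=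
  (\sum_(i <- rng r1 r2) \sum_(j <- rng c1 c2) ent A i j)%R.

Definition Echarge {n} (A : 'M[int]_n) : int :=
  if positive A then cellsum A (orow A).+1 (crow A).-1 (ocol A).+1 n else 0%R.

Definition leadrow {n} (A : 'M[int]_n) : nat :=
  nth 0 [seq i <- rng (orow A).+1 n | has1 A i (rng 1 (ocol A).-1)] 0.
Definition leadcol {n} (A : 'M[int]_n) : nat :=
  nth 0 [seq j <- rng 1 (ocol A).-1 | ent A (leadrow A) j == 1%R] 0.
Definition ell {n} (A : 'M[int]_n) : int :=
  cellsum A (orow A).+1 n (leadcol A).+1 (ocol A).-1.
Definition cc {n} (A : 'M[int]_n) : int :=
  cellsum A (crow A).+1 n (ocol A).+1 (ccol A).-1.

Definition Hdisp (m q : nat) (P : nat -> nat -> int) : nat -> nat -> int :=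
  let js := [seq j <- rng 1 q | has (fun i => P i j != 0%R) (rng 1 m)] in
  let tg := rcons (behead js) q in
  fun i j => if j \in tg then P i (nth 0 js (index j tg)) else 0%R.

Definition Vdisp (m q : nat) (P : nat -> nat -> int) : nat -> nat -> int :=
  let rs := [seq i <- rng 1 m | has (fun j => P i j != 0%R) (rng 1 q)] in
  let tg := belast 1 rs in
  fun i j => if i \in tg then P (nth 0 rs (index i tg)) j else 0%R.

Definition replace (f : nat -> nat -> int) (r1 c1 m q : nat)
    (g : nat -> nat -> int) : nat -> nat -> int :=
  fun i j => if (r1 <= i < r1 + m) && (c1 <= j < c1 + q)
             then g (i - r1).+1 (j - c1).+1 else f i j.

Definition subf (f : nat -> nat -> int) (r1 c1 : nat) : nat -> nat -> int :=
  fun i j => f (r1 + i.-1) (c1 + j.-1).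

Definition delta {n} (A : 'M[int]_n) : 'M[int]_n :=
  let k := orow A in let r := crow A in let o := ocol A in let cl := ccol A in
  let f0 := ent A in
  let f1 := fun i j => if (i == r) && ((j == o) || (j == cl)) then 0%R
                       else f0 i j in
  let m2 := n - r in let q2 := cl.+1 - o in
  let f2 := replace f1 r.+1 o m2 q2 (Hdisp m2 q2 (subf f1 r.+1 o)) in
  let m3 := r.+1 - k in let q3 := o.-1 in
  let f3 := replace f2 k 1 m3 q3 (Vdisp m3 q3 (subf f2 k 1)) in
  let f4 := fun i j =>
    if (0 < j) && (j < o) then
      (if (k < i) && (i <= r) then f3 i.-1 j
       else if i == k then 0%R else f3 i j)
    else if o < j then
      (if (k.+1 < i) && (i <= r) then f3 i.-1 j
       else if i == k.+1 then 0%R else f3 i j)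
    else f3 i j in
  mkmx n f4.

Definition Delta {n} (A : 'M[int]_n) : nat * 'M[int]_n * int * int :=
  (orow A, delta A, cc A, Echarge A).

Definition flip {n} (A : 'M[int]_n) : 'M[int]_n :=
  \matrix_(i < n, j < n) A i (rev_ord j).

Definition inPN {n} (A : 'M[int]_n) : bool :=
  inA1 A && (positive A || neutral A).

Definition LambdaPN {n} (A N : 'M[int]_n) (E : int) : Prop :=
  [/\ inPN A, inPN N, E = Echarge A &
      Delta N = (orow A, delta A, (cc A + Echarge A)%R, 0%R)].

(* Lambda(A) = (N, E), as a relation (the paper shows it is a function) *)
Definition LambdaRel {n} (A N : 'M[int]_n) (E : int) : Prop :=
  LambdaPN A N E \/
  [/\ inA1 A, negative A & LambdaPN (flip A) (flip N) (- E)%R].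

Definition xi {n} (p : 'M[int]_n * int) : 'M[int]_n * int :=
  (p.1, (cc p.1 - ell p.1 - p.2)%R).

Definition ga {n} (N : 'M[int]_n) (i : nat) : int :=
  let r := n.+1 - i in
  let col := nth 0 [seq j <- rng 1 n | ent N r j == 1%R] 0 in
  cellsum N r.+1 n 1 col.-1.

Definition gtable {n} (p : 'M[int]_n * int) : nat * seq int * int * int :=
  let N := p.1 in
  (n.+1 - orow N, [seq ga N i | i <- rng 1 n], cc N, (p.2 + ell N)%R).

(* Both Λ(A) and Λ(A') have the same neutral first component N, and ξ only
   changes the charge; so k, the a_i and b agree, and β' = c(N) - E = b - β + ℓ(N).
   It remains to read ℓ(N) off the table. In a neutral N with opening row r and
   opening column o, row r is zero off its 1 at (r, o), and the leading 1 is the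
   leftmost 1 of the closing row r + 1, say at (r + 1, L). Then a_k sums rows
   > r left of o, a_(k-1) sums rows > r + 1 left of L, and column L has no other
   nonzero entry below r, so a_k = a_(k-1) + 1 + ℓ(N). *)

From mathcomp Require Import all_boot all_order all_algebra zify.
Set Implicit Arguments. Unset Strict Implicit. Unset Printing Implicit Defensive.
Import Order.TTheory GRing.Theory Num.Theory.

Lemma mem_rng a b x : (x \in rng a b) = (a <= x <= b).
Proof. by rewrite /rng mem_iota; apply/idP/idP; lia. Qed.

Lemma rng_uniq a b : uniq (rng a b).
Proof. exact: iota_uniq. Qed.

Lemma rng1 a : rng a a = [:: a].
Proof. by rewrite /rng subSnn. Qed.

Lemma rng_cons a b : a <= b -> rng a b = a :: rng a.+1 b.
Proof. by move=> le_ab; rewrite /rng (_ : b.+1 - a = (b.+1 - a.+1).+1) //; lia. Qed.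

Lemma rng_split a m b : 0 < m -> a <= m <= b ->
  rng a b = rng a m.-1 ++ m :: rng m.+1 b.
Proof.
move=> m_gt0 /andP[le_am le_mb].
rewrite /rng (_ : b.+1 - a = (m.-1.+1 - a) + (b.+1 - m)); last by lia.
rewrite iotaD (_ : a + (m.-1.+1 - a) = m); last by lia.
by rewrite (_ : b.+1 - m = (b.+1 - m.+1).+1) //; lia.
Qed.

Lemma map_subSn_rng n : [seq n.+1 - j | j <- rng 1 n] = rev (rng 1 n).
Proof.
apply: (@eq_from_nth _ 0); first by rewrite size_map size_rev.
move=> i; rewrite size_map /rng size_iota subn1 => lt_in.
rewrite (nth_map 0) ?size_iota // nth_rev ?size_iota // !nth_iota //; lia.
Qed.

Lemma nth_filter_rng_min (p : pred nat) a b : has p (rng a b) ->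
  let x := nth 0 [seq y <- rng a b | p y] 0 in
  [/\ a <= x <= b, p x & forall y, a <= y < x -> ~~ p y].
Proof.
suff min_iota m c : has p (iota c m) ->
    let x := nth 0 [seq y <- iota c m | p y] 0 in
    [/\ c <= x < c + m, p x & forall y, c <= y < x -> ~~ p y].
  by rewrite /rng => /min_iota[range_x px min_x]; split=> //; lia.
elim: m c => [|m IH] c //=.
case pc: (p c) => /=.
  move=> _; split => //; first by rewrite addnS leq_addr andbT.
  by move=> y /andP[le_cy lt_yc]; rewrite leqNgt lt_yc in le_cy.
move=> /IH[range_x px min_x]; split=> //; first by lia.
move=> y /andP[le_cy lt_yx]; case: (eqVneq y c) => [->|ne_yc]; first by rewrite pc.
by apply: min_x; lia.
Qed.

Lemma nth_filter_rng (p : pred nat) a b x : a <= x <= b -> p x ->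
  (forall y, a <= y < x -> ~~ p y) -> nth 0 [seq y <- rng a b | p y] 0 = x.
Proof.
move=> range_x px min_x.
have /nth_filter_rng_min : has p (rng a b) by apply/hasP; exists x; rewrite ?mem_rng.
move: (nth _ _ _) => z [range_z pz min_z].
case: (ltngtP z x) => // lt.
- by move: (min_x z); rewrite pz lt andbT; case/andP: range_z => -> _ /(_ isT).
- by move: (min_z x); rewrite px lt andbT; case/andP: range_x => -> _ /(_ isT).
Qed.

Lemma last_filter_mem (p : pred nat) s :
  has p s -> last 0 [seq x <- s | p x] \in [seq x <- s | p x].
Proof. by rewrite has_filter; case: (filter p s) => // x t _; rewrite /= mem_last. Qed.

Lemma alt_ok_rev s : alt_ok (rev s) = alt_ok s.
Proof.
rewrite /alt_ok all_rev filter_rev; set t := filter _ s.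
have head_rev u : head 0%R (rev u) = last 0%R u.
  by case/lastP: u => // u x; rewrite rev_rcons last_rcons.
have last_rev u : last 0%R (rev u) = head 0%R u.
  by case: u => // x u; rewrite rev_cons last_rcons.
rewrite head_rev last_rev rev_sorted.
case: (all _ s) (last 0%R t == 1%R) (head 0%R t == 1%R) => [] [] [] //=.
case: t => // x t /=; apply: eq_path => u v /=.
by apply/eqP/eqP => ->; rewrite opprK.
Qed.

Lemma alt_ok_vals s x : alt_ok s -> x \in s ->
  (x == 1%R) || (x == 0%R) || (x == (-1)%R).
Proof. by case/andP => /allP vals _ /vals. Qed.

Lemma alt_ok_count_nz s : alt_ok s -> (-1)%R \notin s ->
  count (fun x => x != 0%R) s = 1.
Proof.
move=> alt_s no_neg; rewrite -size_filter.
have nz_one x : x \in [seq x <- s | x != 0%R] -> x = 1%R.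
  rewrite mem_filter => /andP[nz xs].
  move: (alt_ok_vals alt_s xs); rewrite (negbTE nz) orbF => /orP[/eqP //|/eqP ex].
  by rewrite -ex xs in no_neg.
case/andP: alt_s => _; move: nz_one; case: (filter _ s) => [|x [|y t]] nz_one //=.
case/and4P=> _ _ /eqP yx _.
by move: yx; rewrite (nz_one x) ?inE ?eqxx // (nz_one y) ?inE ?eqxx ?orbT.
Qed.

Lemma alt_ok_one_before_neg s1 s2 : alt_ok (s1 ++ (-1)%R :: s2) ->
  (-1)%R \notin s1 -> 1%R \in s1.
Proof.
move=> alt_s no_neg; apply/negPn/negP => no_one.
have zero_s1 : [seq x <- s1 | x != 0%R] = [::].
  apply/eqP; rewrite -(negbK (_ == _)) -has_filter; apply/hasPn => x xs.
  move: (alt_ok_vals alt_s (x := x)); rewrite mem_cat xs => /(_ isT).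
  case/orP=> [/orP[]|] /eqP ex; rewrite ex ?eqxx //= in xs *.
  - by rewrite xs in no_one.
  - by rewrite xs in no_neg.
by case/andP: alt_s => _; rewrite filter_cat zero_s1.
Qed.

Lemma count_uniq_gt1 (T : eqType) (s : seq T) (p : pred T) x y :
  uniq s -> x \in s -> y \in s -> x != y -> p x -> p y -> 1 < count p s.
Proof.
rewrite -size_filter => uniq_s xs ys ne_xy px py.
apply: (uniq_leq_size (s1 := [:: x; y])) => [|z]; first by rewrite /= inE ne_xy.
by rewrite !inE mem_filter => /orP[] /eqP ->; rewrite ?px ?py.
Qed.

Lemma leq_term_sum (T : eqType) (s : seq T) (F : T -> nat) x :
  uniq s -> x \in s -> F x <= \sum_(i <- s) F i.
Proof. by move=> uniq_s xs; rewrite (bigD1_seq x) //= leq_addr. Qed.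

Lemma leq_terms_sum (T : eqType) (s : seq T) (F : T -> nat) x y :
  uniq s -> x \in s -> y \in s -> y != x -> F x + F y <= \sum_(i <- s) F i.
Proof.
move=> uniq_s xs ys ne_yx; rewrite (bigD1_seq x) //= leq_add2l -big_filter.
by apply: leq_term_sum; [exact: filter_uniq | rewrite mem_filter ne_yx].
Qed.

Lemma ler_term_sum (s : seq nat) (F : nat -> int) x : uniq s -> x \in s ->
  (forall y, y \in s -> 0 <= F y)%R -> (F x <= \sum_(i <- s) F i)%R.
Proof.
move=> uniq_s xs F_ge0; rewrite (bigD1_seq x) //= lerDl -big_filter big_seq.
by rewrite sumr_ge0 // => i; rewrite mem_filter => /andP[_ /F_ge0].
Qed.

Section Entries.
Variable n : nat.
Implicit Types M : 'M[int]_n.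

Lemma insub_ord k (lt_kn : k < n) : insub k = Some (Ordinal lt_kn).
Proof.
by case: insubP => [u _ eu|]; [congr Some; apply: val_inj | rewrite lt_kn].
Qed.

Lemma insub_ord_out k : ~~ (k < n) -> (insub k : option 'I_n) = None.
Proof. by move=> ge_kn; case: insubP => // u; rewrite (negbTE ge_kn). Qed.

Lemma entE M i j (lt_i : i.-1 < n) (lt_j : j.-1 < n) :
  ent M i j = if (0 < i) && (0 < j) then M (Ordinal lt_i) (Ordinal lt_j) else 0%R.
Proof. by rewrite /ent !insub_ord. Qed.

Lemma ent_out_row M i j : ~~ (i.-1 < n) -> ent M i j = 0%R.
Proof. by move=> out_i; rewrite /ent insub_ord_out. Qed.

Lemma ent_out_col M i j : ~~ (j.-1 < n) -> ent M i j = 0%R.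
Proof. by move=> out_j; rewrite /ent (insub_ord_out out_j); case: insub. Qed.

Lemma ent0r M i : ent M i 0 = 0%R.
Proof. by rewrite /ent; case: insub => [?|] //; case: insub => [?|] //; rewrite andbF. Qed.

Lemma ent_supp M i j : ent M i j != 0%R -> (0 < i <= n) && (0 < j <= n).
Proof.
case: (ltnP i.-1 n) => lt_i; last by rewrite ent_out_row // -leqNgt.
case: (ltnP j.-1 n) => lt_j; last by rewrite ent_out_col // -leqNgt.
rewrite (entE M lt_i lt_j); case: i lt_i => // i lt_i; case: j lt_j => // j lt_j _.
by rewrite /= in lt_i lt_j *; lia.
Qed.

Lemma ent_neg_supp M i j : ent M i j = (-1)%R -> (0 < i <= n) && (0 < j <= n).
Proof. by move=> neg; apply: (@ent_supp M); rewrite neg. Qed.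

Lemma ent_flip M i j : ent (flip M) i j = ent M i (n.+1 - j).
Proof.
case: (ltnP i.-1 n) => lt_i; last by rewrite !ent_out_row // -leqNgt.
case: j => [|j]; first by rewrite subn0 ent0r ent_out_col //= ltnn.
case: (ltnP j n) => lt_j; last first.
  by rewrite ent_out_col -?leqNgt // subSS (_ : n - j = 0) ?ent0r //; lia.
have lt_j' : (n.+1 - j.+1).-1 < n by lia.
rewrite (entE _ lt_i (lt_j : j.+1.-1 < n)) (entE _ lt_i lt_j') /=.
rewrite (_ : 0 < n.+1 - j.+1); last by lia.
rewrite andbT /flip mxE; case: (0 < i) => //.
by congr (M _ _); apply: val_inj => /=; lia.
Qed.

Lemma cellsum_row_cons M r1 r2 c1 c2 : r1 <= r2 ->
  cellsum M r1 r2 c1 c2 =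
    (\sum_(j <- rng c1 c2) ent M r1 j + cellsum M r1.+1 r2 c1 c2)%R.
Proof. by move=> le_r; rewrite /cellsum rng_cons // big_cons. Qed.

Lemma cellsum_col_split M r1 r2 c1 m c2 : 0 < m -> c1 <= m <= c2 ->
  cellsum M r1 r2 c1 c2 =
    (cellsum M r1 r2 c1 m.-1 + cellsum M r1 r2 m m + cellsum M r1 r2 m.+1 c2)%R.
Proof.
move=> m_gt0 range_m; rewrite /cellsum -!big_split /=; apply: eq_bigr => i _.
by rewrite (rng_split m_gt0 range_m) big_cat big_cons rng1 big_seq1; exact: addrA.
Qed.

Lemma cellsum_eq0 M r1 r2 c1 c2 :
  (forall i j, r1 <= i <= r2 -> c1 <= j <= c2 -> ent M i j = 0%R) ->
  cellsum M r1 r2 c1 c2 = 0%R.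
Proof.
move=> zero; rewrite /cellsum big1_seq // => i; rewrite mem_rng => range_i.
by rewrite big1_seq // => j; rewrite mem_rng => range_j; apply: zero.
Qed.

End Entries.

Section OneNegative.
Variable n : nat.
Implicit Types M : 'M[int]_n.

Lemma isASM_row M i : isASM M -> 0 < i <= n -> alt_ok (rowseq M i).
Proof. by case/andP => /allP rows _ range_i; apply: rows; rewrite mem_rng. Qed.

Lemma isASM_col M j : isASM M -> 0 < j <= n -> alt_ok (colseq M j).
Proof. by case/andP => _ /allP cols range_j; apply: cols; rewrite mem_rng. Qed.

Lemma isASM_ent M i j : isASM M ->
  (ent M i j == 1%R) || (ent M i j == 0%R) || (ent M i j == (-1)%R).
Proof.
move=> asm; case: (eqVneq (ent M i j) 0%R) => [->|nz] //.
case/andP: (ent_supp nz) => range_i range_j.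
have: ent M i j \in rowseq M i by apply/mapP; exists j; rewrite ?mem_rng.
by move/(alt_ok_vals (isASM_row asm range_i)); rewrite (negbTE nz).
Qed.

Lemma inA1_neg_uniq M i j i' j' : inA1 M ->
  ent M i j = (-1)%R -> ent M i' j' = (-1)%R -> i = i' /\ j = j'.
Proof.
case/andP=> _ /eqP count1 neg neg'.
have /andP[range_i range_j] := ent_neg_supp neg.
have /andP[range_i' range_j'] := ent_neg_supp neg'.
set G := fun i => \sum_(j <- rng 1 n) (ent M i j == (-1)%R : nat).
have G_gt0 i1 j1 : 0 < j1 <= n -> ent M i1 j1 = (-1)%R -> 0 < G i1.
  move=> range_j1 neg1; have j1_rng : j1 \in rng 1 n by rewrite mem_rng.
  have := leq_term_sum (fun j => (ent M i1 j == (-1)%R : nat)) (rng_uniq 1 n) j1_rng.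
  by rewrite /= neg1 eqxx.
case: (eqVneq i' i) => [eq_i|ne_i].
  subst i'; split=> //; apply/eqP; apply: contraT => ne_j; rewrite eq_sym in ne_j.
  have := leq_terms_sum (fun j => (ent M i j == (-1)%R : nat)) (rng_uniq 1 n)
    (x := j) (y := j').
  rewrite /= neg neg' eqxx !mem_rng range_j range_j' => /(_ isT isT ne_j) two.
  have := leq_term_sum G (rng_uniq 1 n) (x := i).
  by rewrite -/(negcount M) count1 mem_rng range_i /G => /(_ isT); lia.
have := G_gt0 _ _ range_j neg; have := G_gt0 _ _ range_j' neg'.
have := leq_terms_sum G (rng_uniq 1 n) (x := i) (y := i').
by rewrite -/(negcount M) count1 !mem_rng range_i range_i' => /(_ isT isT ne_i); lia.
Qed.

Lemma inA1_neg_exists M : inA1 M -> exists i j, ent M i j = (-1)%R.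
Proof.
case/andP=> _ /eqP count1.
have sum_gt0 (s : seq nat) (F : nat -> nat) :
    0 < \sum_(i <- s) F i -> exists2 i, i \in s & 0 < F i.
  case: (boolP (has (fun i => 0 < F i) s)) => [/hasP[i ? ?]|/hasPn F0]; first by exists i.
  by rewrite big1_seq // => i /F0; rewrite lt0n negbK => /eqP.
have [i _ /sum_gt0[j _]] := sum_gt0 _ _ (eq_leq (esym count1)).
by case: eqP => // neg _; exists i, j.
Qed.

Lemma crow_ocol_neg M i j : inA1 M -> ent M i j = (-1)%R ->
  crow M = i /\ ocol M = j.
Proof.
move=> inA neg.
have /andP[range_i range_j] := ent_neg_supp neg.
have crow_i : crow M = i.
  apply: nth_filter_rng => //; first by apply/hasP; exists j; rewrite ?mem_rng ?neg.
  move=> y /andP[_ lt_yi]; apply/hasP => -[j' _ /eqP neg'].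
  by case: (inA1_neg_uniq inA neg' neg) => eq_y; rewrite eq_y ltnn in lt_yi.
split=> //; rewrite /ocol crow_i; apply: nth_filter_rng => //; first by rewrite neg.
move=> y /andP[_ lt_yj]; apply/eqP => neg'.
by case: (inA1_neg_uniq inA neg' neg) => _ eq_y; rewrite eq_y ltnn in lt_yj.
Qed.

Lemma inA1_neg M : inA1 M ->
  [/\ ent M (crow M) (ocol M) = (-1)%R, 0 < crow M <= n, 0 < ocol M <= n &
      forall i j, ent M i j = (-1)%R -> i = crow M /\ j = ocol M].
Proof.
move=> inA; have [i [j neg]] := inA1_neg_exists inA.
have [-> ->] := crow_ocol_neg inA neg.
have /andP[range_i range_j] := ent_neg_supp neg.
by split=> // i' j' neg'; apply: inA1_neg_uniq inA neg' neg.
Qed.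

Lemma line_one_uniq (f : nat -> int) x y : alt_ok [seq f j | j <- rng 1 n] ->
  (forall j, f j != (-1)%R) -> 0 < x <= n -> f x = 1%R -> 0 < y <= n -> y != x ->
  f y = 0%R.
Proof.
move=> alt_f no_neg range_x fx range_y ne_yx; apply/eqP; apply: contraT => nz.
have /alt_ok_count_nz : (-1)%R \notin [seq f j | j <- rng 1 n].
  by apply/mapP => -[j _ neg]; move: (no_neg j); rewrite -neg eqxx.
move=> /(_ alt_f); rewrite count_map => count1.
have := count_uniq_gt1 (p := fun j => f j != 0%R) (rng_uniq 1 n) (x := x) (y := y).
by rewrite !mem_rng range_x range_y fx count1 eq_sym ne_yx nz => /(_ isT isT isT isT isT).
Qed.

Lemma line_one_before_neg (f : nat -> int) c : alt_ok [seq f j | j <- rng 1 n] ->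
  0 < c <= n -> f c = (-1)%R -> (forall j, j != c -> f j != (-1)%R) ->
  exists2 j, 0 < j < c & f j = 1%R.
Proof.
move=> alt_f range_c fc no_neg.
rewrite (rng_split (andP range_c).1 range_c) map_cat /= fc in alt_f.
have : (-1)%R \notin [seq f j | j <- rng 1 c.-1].
  apply/mapP => -[j]; rewrite mem_rng => range_j neg.
  have ne_jc : j != c by apply/eqP => eq_j; lia.
  by move: (no_neg j ne_jc); rewrite neg eqxx.
move/(alt_ok_one_before_neg alt_f) => /mapP[j]; rewrite mem_rng => range_j one.
by exists j => //; lia.
Qed.

End OneNegative.

Definition one_col {n} (M : 'M[int]_n) (i : nat) : nat :=
  nth 0 [seq j <- rng 1 n | ent M i j == 1%R] 0.

Lemma ga_row n (M : 'M[int]_n) i : i <= n ->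
  ga M (n.+1 - i) = cellsum M i.+1 n 1 (one_col M i).-1.
Proof. by move=> le_in; rewrite /ga subKn // leqW. Qed.

Section OpeningRow.
Variables (n : nat) (M : 'M[int]_n).
Hypothesis inA : inA1 M.

Let asm : isASM M := (andP inA).1.

Lemma orow_one : ent M (orow M) (ocol M) = 1%R /\ 0 < orow M < crow M.
Proof.
have [neg range_c range_o neg_uniq] := inA1_neg inA.
have [i range_i one_i] : exists2 i, 0 < i < crow M & ent M i (ocol M) = 1%R.
  apply: (line_one_before_neg (isASM_col asm range_o) range_c neg) => i ne_i.
  by apply/eqP => /neg_uniq[eq_i _]; rewrite eq_i eqxx in ne_i.
have : orow M \in [seq i <- rng 1 (crow M).-1 | ent M i (ocol M) == 1%R].
  by apply: last_filter_mem; apply/hasP; exists i; rewrite ?mem_rng ?one_i //; lia.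
by rewrite mem_filter mem_rng => /andP[/eqP one range_r]; split=> //; lia.
Qed.

Lemma row_orow_eq0 j : 0 < j <= n -> j != ocol M -> ent M (orow M) j = 0%R.
Proof.
have [_ range_c range_o neg_uniq] := inA1_neg inA; have [one range_r] := orow_one.
apply: (line_one_uniq (isASM_row asm (_ : 0 < orow M <= n)) _ range_o one); first by lia.
by move=> j'; apply/eqP => /neg_uniq[eq_r _]; lia.
Qed.

Lemma one_col_orow : one_col M (orow M) = ocol M.
Proof.
have [_ _ range_o _] := inA1_neg inA; have [one _] := orow_one.
apply: nth_filter_rng => //; first by rewrite one.
by move=> j range_j; rewrite row_orow_eq0 //; [lia | apply/eqP => eq_j; lia].
Qed.

Lemma col_eq0_off_one i0 j : 0 < j <= n -> j != ocol M -> ent M i0 j = 1%R ->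
  forall i, 0 < i <= n -> i != i0 -> ent M i j = 0%R.
Proof.
have [_ _ _ neg_uniq] := inA1_neg inA => range_j ne_jo one.
have /andP[range_i0 _] : (0 < i0 <= n) && (0 < j <= n) by apply: (@ent_supp _ M); rewrite one.
move=> i range_i ne_i.
apply: (line_one_uniq (isASM_col asm range_j) _ range_i0 one range_i ne_i) => i'.
by apply/eqP => /neg_uniq[_ eq_j]; rewrite eq_j eqxx in ne_jo.
Qed.

Lemma crow_first_one (L := one_col M (crow M)) :
  [/\ 0 < L < ocol M, ent M (crow M) L = 1%R &
      forall j, 0 < j < L -> ent M (crow M) j = 0%R].
Proof.
have [neg range_c range_o neg_uniq] := inA1_neg inA.
have [j1 range_j1 one_j1] : exists2 j, 0 < j < ocol M & ent M (crow M) j = 1%R.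
  apply: (line_one_before_neg (isASM_row asm range_c) range_o neg) => j ne_j.
  by apply/eqP => /neg_uniq[_ eq_j]; rewrite eq_j eqxx in ne_j.
have [|range_L /eqP one_L min_L] :=
    nth_filter_rng_min (p := fun j => ent M (crow M) j == 1%R) (a := 1) (b := n).
  by apply/hasP; exists j1; rewrite ?mem_rng ?one_j1 //; lia.
rewrite -/(one_col M (crow M)) -/L in range_L one_L min_L.
have not_one j : 0 < j < L -> ent M (crow M) j != 1%R by move=> range_j; apply: min_L.
have le_L : L <= j1.
  by rewrite leqNgt; apply/negP => lt_j1; move: (not_one j1); rewrite one_j1 eqxx; lia.
split=> //; first by lia.
move=> j range_j; have := isASM_ent (crow M) j asm.
case/orP=> [/orP[]|] /eqP ent_j //.
  by move: (not_one j range_j); rewrite ent_j eqxx.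
by have [_ eq_j] := neg_uniq _ _ ent_j; lia.
Qed.

Hypothesis neu : neutral M.

Lemma leadcol_neutral : leadcol M = one_col M (crow M).
Proof.
have [range_L one_L zero_L] := crow_first_one.
have [_ range_c _ _] := inA1_neg inA; have c_r : crow M = (orow M).+1 := eqP neu.
have lead_c : leadrow M = crow M.
  apply: nth_filter_rng; first by lia.
    by apply/hasP; exists (one_col M (crow M)); rewrite ?mem_rng ?one_L //; lia.
  by move=> y; lia.
rewrite /leadcol lead_c; apply: nth_filter_rng; first by lia.
  by rewrite one_L.
by move=> j range_j; rewrite zero_L.
Qed.

Lemma ell_neutral : ell M = (ga M (n.+1 - orow M) - ga M (n - orow M) - 1)%R.
Proof.
have [range_L one_L zero_L] := crow_first_one.
have [_ range_c range_o _] := inA1_neg inA.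
set c := crow M in range_L one_L zero_L range_c *; set o := ocol M in range_L range_o *.
set L := one_col M c in range_L one_L zero_L *; set r := orow M.
have c_r : c = r.+1 := eqP neu.
have a_k : ga M (n.+1 - r) = cellsum M c n 1 o.-1.
  by rewrite ga_row ?one_col_orow -?c_r //; lia.
have a_k1 : ga M (n - r) = cellsum M c.+1 n 1 L.-1.
  by rewrite (_ : n - r = n.+1 - c) ?ga_row //; lia.
have col_L : cellsum M c n L L = 1%R.
  rewrite cellsum_row_cons ?rng1 ?big_seq1 ?one_L; last by lia.
  rewrite cellsum_eq0 ?addr0 // => i j range_i range_j; have -> : j = L by lia.
  by apply: (col_eq0_off_one _ _ one_L); [lia | apply/eqP; lia | lia | apply/eqP; lia].
have row_c : cellsum M c n 1 L.-1 = cellsum M c.+1 n 1 L.-1.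
  rewrite cellsum_row_cons ?big1_seq ?add0r //; last by lia.
  by move=> j; rewrite mem_rng /= => range_j; apply: zero_L; lia.
rewrite /ell leadcol_neutral -/c -/L -c_r -/o a_k a_k1.
by rewrite (@cellsum_col_split _ M c n 1 L o.-1) ?row_c ?col_L; lia.
Qed.

End OpeningRow.

Section Discharge.
Variable n : nat.
Implicit Types M : 'M[int]_n.

(* Outside the closing row all entries are nonnegative, while a positive
   matrix has a 1 in the charged cell; hence E > 0. *)
Lemma Echarge0_neutral M : inPN M -> Echarge M = 0%R -> neutral M.
Proof.
case/andP=> inA /orP[pos|//] E0; exfalso.
have [_ _ _ neg_uniq] := inA1_neg inA.
have ge0 i j : i != crow M -> (0 <= ent M i j)%R.
  move=> ne_i; have := isASM_ent i j (andP inA).1.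
  case/orP=> [/orP[]|] /eqP ent_ij; rewrite ent_ij //.
  by have [eq_i _] := neg_uniq _ _ ent_ij; rewrite eq_i eqxx in ne_i.
move: E0; rewrite /Echarge pos /cellsum; case/andP: pos => lt_rc /hasP[j range_j /eqP one].
set rowsum := fun i => (\sum_(j <- rng (ocol M).+1 n) ent M i j)%R.
have ne_c1 : (crow M).-1 != crow M by apply/eqP; lia.
have rowsum_c1 : (1 <= rowsum (crow M).-1)%R.
  rewrite -one; apply: (@ler_term_sum _ (ent M (crow M).-1) _ (rng_uniq _ _) range_j).
  by move=> j' _; apply: ge0.
have row_c1 : (crow M).-1 \in rng (orow M).+1 (crow M).-1 by rewrite mem_rng; lia.
suff : (1 <= \sum_(i <- rng (orow M).+1 (crow M).-1) rowsum i)%R by move=> + E0; rewrite E0.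
apply: le_trans rowsum_c1 (@ler_term_sum _ rowsum _ (rng_uniq _ _) row_c1 _).
move=> i; rewrite mem_rng => range_i; rewrite /rowsum big_seq sumr_ge0 // => j' _.
by apply: ge0; apply/eqP; lia.
Qed.

Lemma rowseq_flip M i : rowseq (flip M) i = rev (rowseq M i).
Proof.
rewrite /rowseq -map_rev -map_subSn_rng -map_comp; apply: eq_map => j /=.
by rewrite ent_flip.
Qed.

Lemma colseq_flip M j : 0 < j <= n -> colseq (flip M) (n.+1 - j) = colseq M j.
Proof. by move=> range_j; apply: eq_map => i /=; rewrite ent_flip subKn //; lia. Qed.

Lemma flip_inA1 M : inA1 (flip M) -> inA1 M.
Proof.
case/andP=> /andP[/allP rows /allP cols] count1; apply/andP; split; [apply/andP; split|].
- by apply/allP => i range_i; rewrite -alt_ok_rev -rowseq_flip; apply: rows.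
- apply/allP => j; rewrite mem_rng => range_j.
  by rewrite -colseq_flip //; apply: cols; rewrite mem_rng; lia.
- move: count1; rewrite /negcount; congr (_ == _); apply: eq_bigr => i _.
  under eq_bigr do rewrite ent_flip.
  rewrite -(big_map (fun j => n.+1 - j) xpredT (fun j => (ent M i j == (-1)%R : nat))).
  by rewrite map_subSn_rng big_rev.
Qed.

Lemma flip_neutral M : inA1 (flip M) -> neutral (flip M) -> neutral M.
Proof.
move=> inA_flip; have [neg range_c range_o _] := inA1_neg (flip_inA1 inA_flip).
have neg_flip : ent (flip M) (crow M) (n.+1 - ocol M) = (-1)%R.
  by rewrite ent_flip subKn //; lia.
rewrite /neutral /orow; have [-> ->] := crow_ocol_neg inA_flip neg_flip.
congr (_ == (last 0 _).+1).
by apply: eq_filter => i; rewrite ent_flip subKn //; lia.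
Qed.

End Discharge.

Lemma LambdaRel_neutral n (A N : 'M[int]_n) E :
  LambdaRel A N E -> inA1 N /\ neutral N.
Proof.
case=> [[_ inPN_N _ [_ _ _ E0]] | [_ _ [_ inPN_N _ [_ _ _ E0]]]].
  by split; [case/andP: inPN_N | exact: Echarge0_neutral].
have inA_flip : inA1 (flip N) by case/andP: inPN_N.
by split; [exact: flip_inA1 | apply: flip_neutral => //; exact: Echarge0_neutral].
Qed.

Theorem corollary1 (n : nat) (A N : 'M[int]_n) (E : int) :
  inA1 A -> LambdaRel A N E ->
  forall (k : nat) (a : seq int) (b beta : int),
    gtable (N, E) = (k, a, b, beta) ->
    gtable (xi (N, E)) =
      (k, a, b, (b - beta + nth 0 a k.-1 - nth 0 a k.-2 - 1)%R).
Proof.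
move=> _ /LambdaRel_neutral[inA neu] k a b beta.
have [_ range_r] := orow_one inA; have [_ range_c _ _] := inA1_neg inA.
rewrite /gtable /xi /= => -[<- <- <- <-].
have nth_ga i : 0 < i <= n -> nth 0%R [seq ga N i | i <- rng 1 n] i.-1 = ga N i.
  by move=> range_i; rewrite (nth_map 0) /rng ?size_iota ?nth_iota; try lia; congr ga; lia.
rewrite nth_ga; last by lia.
rewrite (_ : (n.+1 - orow N).-2 = (n - orow N).-1) ?nth_ga; try lia.
by rewrite (ell_neutral inA neu); congr (_, _); lia.
Qed.
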